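(* In the setting below (planted submatrix signal), if the multigraph $\alpha\in\mathbb{N}^{N}$ has a connected component containing at least one edge that does not contain vertex $1$, then $\kappa_\alpha=0$. In particular $\kappa_\alpha=0$ whenever $\alpha$ is disconnected.
   Context: Let $n\ge1$, $\lambda\ge0$, $\rho\in(0,1)$, $v\in\{0,1\}^n$ with i.i.d. $\mathrm{Bernoulli}(\rho)$ entries, $N=n(n+1)/2$ indexed by pairs $(i,j)$ with $1\le i\le j\le n$, $X_{ij}=\lambda v_iv_j$, and $x=v_1$. An index $\alpha=(\alpha_{ij})_{i\le j}\in\mathbb{N}^N$ is viewed as a multigraph on vertex set $[n]$ (self-loops allowed) with $\alpha_{ij}$ edges between $i$ and $j$; $|\alpha|$ is its number of edges and $V(\alpha)$ the set of vertices spanned by its edges. $\kappa_\alpha$ is defined recursively by $\kappa_\alpha=\mathbb{E}[xX^\alpha]-\sum_{0\le\beta\lneq\alpha}\kappa_\beta\binom{\alpha}{\beta}\mathbb{E}[X^{\alpha-\beta}]$, with multi-index notation $X^\alpha=\prod X_{ij}^{\alpha_{ij}}$, $\binom{\alpha}{\beta}=\prod\binom{\alpha_{ij}}{\beta_{ij}}$, $\beta\le\alpha$ entrywise, $\beta\lneq\alpha$ meaning $\beta\le\alpha$, $\beta\ne\alpha$. *)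

From HB Require Import structures.
From mathcomp Require Import all_boot all_order all_algebra.
Set Implicit Arguments. Unset Strict Implicit. Unset Printing Implicit Defensive.
Import Order.TTheory GRing.Theory Num.Theory.
Local Open Scope ring_scope.

(* Index set of the N = n(n+1)/2 entries: pairs (i,j) of vertices with i <= j. *)
Definition pairs (n : nat) := {p : 'I_n * 'I_n | (p.1 <= p.2)%N}.

(* Multi-indices alpha in N^N (multigraphs on [n] with self-loops). *)
Definition midx (n : nat) := {ffun pairs n -> nat}.

Definition msize n (a : midx n) : nat := (\sum_(p : pairs n) a p)%N.

Definition mle n (b a : midx n) : bool := [forall p, (b p <= a p)%N].
Definition msub n (a b : midx n) : midx n := [ffun p => (a p - b p)%N].

Section Model.
Variables (R : realFieldType) (n : nat) (lambda rho : R).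

Definition bern_weight (v : {ffun 'I_n -> bool}) : R :=
  \prod_(i < n) (if v i then rho else 1 - rho).
Definition Expect (f : {ffun 'I_n -> bool} -> R) : R :=
  \sum_(v : {ffun 'I_n -> bool}) bern_weight v * f v.

Definition Xent (v : {ffun 'I_n -> bool}) (p : pairs n) : R :=
  lambda * (v (val p).1)%:R * (v (val p).2)%:R.
Definition Xpow (v : {ffun 'I_n -> bool}) (a : midx n) : R :=
  \prod_(p : pairs n) Xent v p ^+ a p.
Definition mbinom (a b : midx n) : R := \prod_(p : pairs n) ('C(a p, b p))%:R.

Variable one : 'I_n. (* the distinguished vertex 1; x = v_1 *)

(* kappa, by recursion with fuel; beta ranges over all beta <= alpha, beta != alpha,
   enumerated via ffuns bounded by |alpha| (each such beta appears exactly once). *)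
Fixpoint kappa_fuel (k : nat) (a : midx n) : R :=
  match k with
  | 0 => 0
  | k'.+1 =>
      Expect (fun v => (v one)%:R * Xpow v a)
      - \sum_(c : {ffun pairs n -> 'I_(msize a).+1}
               | mle [ffun p => val (c p)] a && ([ffun p => val (c p)] != a))
          kappa_fuel k' [ffun p => val (c p)]
          * mbinom a [ffun p => val (c p)]
          * Expect (fun v => Xpow v (msub a [ffun p => val (c p)]))
  end.

Definition kappa (a : midx n) : R := kappa_fuel (msize a).+1 a.
End Model.

Definition madj n (a : midx n) : rel 'I_n := fun i j =>
  [exists p : pairs n, (0 < a p)%N &&
     ((((val p).1 == i) && ((val p).2 == j)) || (((val p).1 == j) && ((val p).2 == i)))].

From HB Require Import structures.
From mathcomp Require Import all_boot all_order all_algebra.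
Set Implicit Arguments. Unset Strict Implicit. Unset Printing Implicit Defensive.
Import Order.TTheory GRing.Theory Num.Theory.
Local Open Scope ring_scope.

(* Let S be a set of vertices containing vertex 1 such that no edge of the
   multigraph alpha crosses S, and split alpha = alpha1 + alpha2 into its edges
   inside S and outside S.  If alpha2 <> 0 then kappa_alpha = 0, by strong
   induction on |alpha|: in the defining recursion
     kappa_alpha = E[x X^alpha] - sum_(beta < alpha) kappa_beta C(alpha,beta) E[X^(alpha-beta)]
   the terms with beta not below alpha1 vanish by induction, while for
   beta <= alpha1 the moment E[X^(alpha-beta)] factors as
   E[X^(alpha1-beta)] E[X^alpha2] (the monomials depend on disjoint sets of
   independent coordinates of v).  Those terms therefore resum, through the
   moment-cumulant identity for alpha1, to E[x X^alpha1] E[X^alpha2], which is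
   E[x X^alpha] by independence again.  The theorem takes for S the connected
   component of vertex 1. *)

Section MultiIndices.
Variable n : nat.
Implicit Types a b g : midx n.

Lemma mle_le b a : mle b a -> forall p, (b p <= a p)%N.
Proof. by move=> /forallP. Qed.

Lemma leq_msize a p : (a p <= msize a)%N.
Proof. by rewrite /msize (bigD1 p) //= leq_addr. Qed.

Lemma msize_lt b a : mle b a -> b != a -> (msize b < msize a)%N.
Proof.
move=> /mle_le le_ba neq_ba.
have [p lt_p] : exists p, (b p < a p)%N.
  apply/existsP; apply: contraNT neq_ba => /existsPn ge_ba.
  by apply/eqP/ffunP => p; apply/eqP; rewrite eqn_leq le_ba leqNgt ge_ba.
rewrite /msize (bigD1 p) // [X in (_ < X)%N](bigD1 p) //=.
by rewrite -addSn leq_add // leq_sum.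
Qed.

(* The recursion defining kappa sums over maps c : pairs n -> 'I_m, read as
   multi-indices fv c; encode m b is the inverse encoding of b when b <= m. *)
Definition fv m (c : {ffun pairs n -> 'I_m}) : midx n := [ffun p => val (c p)].

Lemma fv_inj m : injective (@fv m).
Proof.
move=> c1 c2 /ffunP eq_c; apply/ffunP => p; apply: val_inj.
by move: (eq_c p); rewrite !ffunE.
Qed.

Definition encode m b : {ffun pairs n -> 'I_m.+1} := [ffun p => inord (b p)].

Lemma encodeK m b : (forall p, b p <= m)%N -> fv (encode m b) = b.
Proof.
by move=> le_bm; apply/ffunP => p; rewrite ffunE [encode _ _ _]ffunE; apply: inordK; rewrite ltnS.
Qed.

Lemma perm_encodings m k (Q : pred (midx n)) :
  (forall b p, Q b -> b p <= minn m k)%N ->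
  perm_eq [seq b <- map (@fv m.+1) (index_enum {ffun pairs n -> 'I_m.+1}) | Q b]
          [seq b <- map (@fv k.+1) (index_enum {ffun pairs n -> 'I_k.+1}) | Q b].
Proof.
move=> bnd; apply: uniq_perm.
- by rewrite filter_uniq // (map_inj_uniq (@fv_inj _)) // index_enum_uniq.
- by rewrite filter_uniq // (map_inj_uniq (@fv_inj _)) // index_enum_uniq.
move=> b; rewrite !mem_filter; apply: andb_id2l => Qb.
have [le_m le_k] : (forall p, b p <= m)%N /\ (forall p, b p <= k)%N.
  by split=> p; have := bnd b p Qb; rewrite leq_min => /andP[].
apply/idP/idP => _; [rewrite -(encodeK le_k) | rewrite -(encodeK le_m)].
  by apply: map_f; rewrite mem_index_enum.
by apply: map_f; rewrite mem_index_enum.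
Qed.

Lemma sum_encodings (R : nmodType) m k (Q : pred (midx n)) (F : midx n -> R) :
  (forall b p, Q b -> b p <= minn m k)%N ->
  \sum_(c : {ffun pairs n -> 'I_m.+1} | Q (fv c)) F (fv c) =
  \sum_(c : {ffun pairs n -> 'I_k.+1} | Q (fv c)) F (fv c).
Proof.
move=> bnd; rewrite -!(big_map (@fv _) Q F) -[LHS]big_filter -[RHS]big_filter.
exact: perm_big (perm_encodings bnd).
Qed.

Definition Vset (g : midx n) : {set 'I_n} :=
  [set i | [exists p : pairs n, (0 < g p)%N && (((val p).1 == i) || ((val p).2 == i))]].

Definition madd (g1 g2 : midx n) : midx n := [ffun p => (g1 p + g2 p)%N].

Lemma msizeD (g1 g2 : midx n) : msize (madd g1 g2) = (msize g1 + msize g2)%N.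
Proof. by rewrite /msize -big_split; apply: eq_bigr => p _; rewrite ffunE. Qed.

Lemma VsetD (g1 g2 : midx n) : Vset (madd g1 g2) = Vset g1 :|: Vset g2.
Proof.
apply/setP => i; rewrite !inE; apply/existsP/orP.
  case=> p /andP[]; rewrite ffunE addn_gt0 => /orP[] gp e; [left|right];
  by apply/existsP; exists p; rewrite gp.
by case=> /existsP[p /andP[gp e]]; exists p; rewrite ffunE addn_gt0 gp ?orbT.
Qed.

Lemma Vset_sub (g h : midx n) :
  (forall p, 0 < g p -> 0 < h p)%N -> Vset g \subset Vset h.
Proof.
move=> gh; apply/subsetP => i; rewrite !inE => /existsP[p /andP[gp e]].
by apply/existsP; exists p; rewrite gh.
Qed.

Definition mpart (S : {set 'I_n}) (a : midx n) : midx n :=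
  [ffun p => if (val p).1 \in S then a p else 0%N].

Definition mclosed (S : {set 'I_n}) (a : midx n) : Prop :=
  forall p, (0 < a p)%N -> ((val p).1 \in S) = ((val p).2 \in S).

Lemma mclosedC (S : {set 'I_n}) (a : midx n) : mclosed S a -> mclosed (~: S) a.
Proof. by move=> cl p ap; rewrite !inE (cl p ap). Qed.

Lemma mpart_add (S : {set 'I_n}) (a : midx n) : a = madd (mpart S a) (mpart (~: S) a).
Proof. by apply/ffunP => p; rewrite !ffunE inE; case: ifP; rewrite ?addn0. Qed.

Lemma Vset_mpart (S : {set 'I_n}) (a : midx n) : mclosed S a -> Vset (mpart S a) \subset S.
Proof.
move=> cl; apply/subsetP => i; rewrite inE => /existsP[p /andP[]].
by rewrite ffunE; case: ifP => // p1S ap /orP[] /eqP <- //; rewrite -(cl p ap).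
Qed.

Lemma msub_mpart (S : {set 'I_n}) a b : mle b (mpart S a) ->
  msub a b = madd (msub (mpart S a) b) (mpart (~: S) a).
Proof.
move=> /mle_le le_b; apply/ffunP => p; rewrite !ffunE inE.
move: (le_b p); rewrite ffunE; case: ifP => _; first by rewrite addn0.
by rewrite leqn0 => /eqP ->; rewrite !subn0.
Qed.

Lemma msub_gt0 a b p : (0 < msub a b p)%N -> (0 < a p)%N.
Proof. by rewrite ffunE; case: (a p); rewrite ?sub0n. Qed.

Lemma madj_connect_sym a : connect_sym (madj a).
Proof.
by apply: sym_connect_sym => i k; apply/existsP/existsP => -[p hp]; exists p; rewrite orbC.
Qed.

Lemma component_closed a j : mclosed [set i | connect (madj a) i j] a.
Proof.
move=> p ap; rewrite !inE.
have adj_p : connect (madj a) (val p).1 (val p).2.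
  by apply: connect1; apply/existsP; exists p; rewrite ap !eqxx.
by apply/idP/idP; apply: connect_trans; rewrite // madj_connect_sym.
Qed.

Lemma disjoint_sides (S A B : {set 'I_n}) : A \subset S -> B \subset ~: S -> [disjoint A & B].
Proof. by move=> sAS sBS; rewrite disjoints_subset (subset_trans sAS) // subsetC. Qed.
End MultiIndices.

Lemma prod_nat_bool (R : comPzSemiRingType) (I : finType) (P : pred I) :
  \prod_(i : I) (P i)%:R = ([forall i, P i])%:R :> R.
Proof.
have [/forallP allP | /forallPn [i notPi]] := boolP [forall i, P i].
  by rewrite big1 // => i _; rewrite allP.
by rewrite (bigD1 i) //= (negbTE notPi) mul0r.
Qed.

Section Moments.
Variables (R : realFieldType) (n : nat) (lambda rho : R).
Implicit Types (g : midx n) (A : {set 'I_n}) (f : {ffun 'I_n -> bool} -> R).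

Lemma eq_Expect f1 f2 : f1 =1 f2 -> Expect rho f1 = Expect rho f2.
Proof. by move=> eq_f; apply: eq_bigr => v _; rewrite eq_f. Qed.

Lemma Expect_scale c f : Expect rho (fun v => c * f v) = c * Expect rho f.
Proof. by rewrite /Expect mulr_sumr; apply: eq_bigr => v _; rewrite mulrCA. Qed.

Lemma XpowE v g : Xpow lambda v g = lambda ^+ msize g * ([forall i in Vset g, v i])%:R.
Proof.
rewrite /Xpow /Xent.
under eq_bigr => p _ do rewrite -mulrA exprMn.
rewrite big_split /= prodrXr; congr (_ * _).
rewrite (eq_bigr (fun p => ((0 < g p)%N ==> v (val p).1 && v (val p).2)%:R)); last first.
  move=> p _; case: (g p) => [|k] //=.
  by rewrite -natrM; case: (v _); case: (v _); rewrite ?expr1n ?expr0n.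
rewrite prod_nat_bool; congr ((nat_of_bool _)%:R); apply/idP/idP => /forallP allV; apply/forallP.
  move=> i; apply/implyP; rewrite inE => /existsP[p /andP[gp e]].
  by move: (implyP (allV p) gp) => /andP[v1 v2]; case/orP: e => /eqP <-.
have inV i p : (0 < g p)%N -> ((val p).1 == i) || ((val p).2 == i) -> v i.
  by move=> gp e; apply: (implyP (allV i)); rewrite inE; apply/existsP; exists p; rewrite gp.
by move=> p; apply/implyP => gp; rewrite (inV _ p) ?(inV _ p) ?eqxx ?orbT.
Qed.

Lemma Expect_all A : Expect rho (fun v => ([forall i in A, v i])%:R) = rho ^+ #|A|.
Proof.
rewrite /Expect.
under eq_bigr => v _.
  rewrite -(prod_nat_bool R (fun i => (i \in A) ==> v i)) /bern_weight -big_split /=.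
  over.
rewrite /= -(bigA_distr_bigA (fun i b => (if b then rho else 1 - rho) * ((i \in A) ==> b)%:R)).
rewrite -prodr_const [RHS]big_mkcond /=; apply: eq_bigr => i _.
rewrite big_bool /=; case: (i \in A) => /=; first by rewrite mulr1 mulr0 addr0.
by rewrite !mulr1 addrC subrK.
Qed.

Lemma moment_X g : Expect rho (fun v => Xpow lambda v g) = lambda ^+ msize g * rho ^+ #|Vset g|.
Proof.
by rewrite (eq_Expect (fun v => XpowE v g)) Expect_scale Expect_all.
Qed.

Lemma moment_xX (one : 'I_n) g :
  Expect rho (fun v => (v one)%:R * Xpow lambda v g) =
  lambda ^+ msize g * rho ^+ #|one |: Vset g|.
Proof.
rewrite -Expect_all -Expect_scale; apply: eq_Expect => v.
rewrite XpowE mulrCA -natrM mulnb; congr (_ * (nat_of_bool _)%:R).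
apply/idP/idP => [/andP[v1 /forallP allV] | /forallP allV].
  apply/forallP => i; rewrite in_setU1; apply/implyP => /orP[/eqP -> // | iV].
  exact: (implyP (allV i)).
apply/andP; split; first by apply: (implyP (allV one)); rewrite in_setU1 eqxx.
by apply/forallP => i; apply/implyP => iV; apply: (implyP (allV i)); rewrite in_setU1 iV orbT.
Qed.

Lemma card_disjointU A1 A2 : [disjoint A1 & A2] -> #|A1 :|: A2| = (#|A1| + #|A2|)%N.
Proof. by move=> disj; apply/eqP; rewrite (leq_card_setU A1 A2).2. Qed.

Lemma moment_X_disjoint g1 g2 : [disjoint Vset g1 & Vset g2] ->
  Expect rho (fun v => Xpow lambda v (madd g1 g2)) =
  Expect rho (fun v => Xpow lambda v g1) * Expect rho (fun v => Xpow lambda v g2).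
Proof.
by move=> disj; rewrite !moment_X msizeD VsetD card_disjointU // !exprD mulrACA.
Qed.

Lemma moment_xX_disjoint (one : 'I_n) g1 g2 : [disjoint one |: Vset g1 & Vset g2] ->
  Expect rho (fun v => (v one)%:R * Xpow lambda v (madd g1 g2)) =
  Expect rho (fun v => (v one)%:R * Xpow lambda v g1) *
  Expect rho (fun v => Xpow lambda v g2).
Proof.
move=> disj; rewrite !moment_xX moment_X msizeD VsetD setUA.
by rewrite card_disjointU // !exprD mulrACA.
Qed.
End Moments.

Section Cumulants.
Variables (R : realFieldType) (n : nat) (lambda rho : R) (one : 'I_n).
Implicit Types a b : midx n.

Local Notation E f := (Expect rho f).
Local Notation X v g := (Xpow lambda v g).
Local Notation kap := (kappa lambda rho one).

(* The contribution of beta <= alpha to the expansion of E[x X^alpha]. *)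
Definition cterm a b : R := kap b * mbinom R a b * E (fun v => X v (msub a b)).

(* Any fuel exceeding |b| gives the same value, since each recursive call
   is on a strictly smaller multi-index; in particular it computes kappa_b. *)
Lemma kappa_fuel_stable k k' b : (msize b < k)%N -> (msize b < k')%N ->
  kappa_fuel lambda rho one k b = kappa_fuel lambda rho one k' b.
Proof.
elim: k k' b => // k IH [//|k'] b lt_bk lt_bk' /=; congr (_ - _).
apply: eq_bigr => c /andP[le_cb neq_cb]; have lt_c := msize_lt le_cb neq_cb.
by rewrite (IH k') // (leq_trans lt_c).
Qed.

Lemma kappa_rec a : kap a = E (fun v => (v one)%:R * X v a)
  - \sum_(c : {ffun pairs n -> 'I_(msize a).+1} | mle (fv c) a && (fv c != a)) cterm a (fv c).
Proof.
rewrite {1}/kappa /=; congr (_ - _); apply: eq_bigr => c /andP[le_ca neq_ca].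
by rewrite /cterm (kappa_fuel_stable (k' := (msize (fv c)).+1)) // msize_lt.
Qed.

Lemma moment_cumulant a : E (fun v => (v one)%:R * X v a) =
  \sum_(c : {ffun pairs n -> 'I_(msize a).+1} | mle (fv c) a) cterm a (fv c).
Proof.
have enc_a : fv (encode (msize a) a) = a by apply: encodeK; exact: leq_msize.
have top : cterm a a = kap a.
  (* beta = alpha contributes kappa_alpha C(alpha,alpha) E[X^0] = kappa_alpha *)
  have msubaa : msub a a = [ffun=> 0%N] by apply/ffunP => p; rewrite !ffunE subnn.
  have V0 : Vset (msub a a) = set0.
    by apply/setP => i; rewrite !inE; apply/existsP => -[p]; rewrite msubaa ffunE.
  rewrite /cterm moment_X V0 cards0 msubaa /msize big1 => [|p _]; last by rewrite ffunE.
  by rewrite /mbinom big1 => [|p _]; rewrite ?binn // !expr0 !mulr1.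
rewrite (bigD1 (encode (msize a) a)) /=; last by rewrite enc_a; apply/forallP.
rewrite enc_a top kappa_rec.
rewrite [Y in _ + Y](eq_bigl (fun c => mle (fv c) a && (fv c != a))) ?subrK // => c.
by rewrite -(inj_eq (@fv_inj _ _)) enc_a.
Qed.

Lemma mbinom_mpart (S : {set 'I_n}) a b : mle b (mpart S a) ->
  mbinom R a b = mbinom R (mpart S a) b.
Proof.
move=> /mle_le le_b; apply: eq_bigr => p _.
by move: (le_b p); rewrite ffunE; case: ifP => // _; rewrite leqn0 => /eqP ->; rewrite !bin0.
Qed.

Lemma cterm_mpart (S : {set 'I_n}) a b : mclosed S a -> mle b (mpart S a) ->
  cterm a b = cterm (mpart S a) b * E (fun v => X v (mpart (~: S) a)).
Proof.
move=> clS le_b; rewrite /cterm (mbinom_mpart le_b) (msub_mpart le_b).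
rewrite moment_X_disjoint ?mulrA //; apply: (disjoint_sides (S := S)).
  by apply: subset_trans (Vset_mpart clS); apply: Vset_sub => p; exact: msub_gt0.
exact: Vset_mpart (mclosedC clS).
Qed.

Lemma kappa_edge_outside (S : {set 'I_n}) a : one \in S -> mclosed S a ->
  (exists2 p, 0 < a p & (val p).1 \notin S)%N -> kap a = 0.
Proof.
move=> oneS; elim: (msize a).+1 {-2}a (ltnSn (msize a)) => // k IH {}a lt_ak clS.
case=> p0 ap0 p0S.
set a1 := mpart S a; set a2 := mpart (~: S) a.
have le_a1 : mle a1 a by apply/forallP => p; rewrite ffunE; case: ifP.
have outside (c : {ffun pairs n -> 'I_(msize a).+1}) :
    mle (fv c) a && (fv c != a) && ~~ mle (fv c) a1 -> cterm a (fv c) = 0.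
  case/andP=> /andP[le_ca neq_ca] /forallPn[p]; rewrite -ltnNge => lt_p.
  suff kc0 : kap (fv c) = 0 by rewrite /cterm kc0 !mul0r.
  apply: IH; first exact: leq_trans (msize_lt le_ca neq_ca) (lt_ak : (msize a <= k)%N).
    by move=> q cq; apply: clS; exact: leq_trans cq (mle_le le_ca q).
  exists p; first exact: leq_ltn_trans (leq0n _) lt_p.
  by apply: contraTN lt_p => p1S; rewrite -leqNgt /a1 [mpart _ _ _]ffunE p1S (mle_le le_ca).
have inside : \sum_(c : {ffun pairs n -> 'I_(msize a).+1} |
                   mle (fv c) a && (fv c != a) && mle (fv c) a1) cterm a (fv c) =
              E (fun v => (v one)%:R * X v a1) * E (fun v => X v a2).
  rewrite moment_cumulant mulr_suml.
  rewrite (sum_encodings (k := msize a) (Q := fun b => mle b a1)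
                            (fun b => cterm a1 b * E (fun v => X v a2))); last first.
    move=> b p /mle_le le_b; rewrite leq_min !(leq_trans (le_b p)) ?leq_msize //.
    exact: leq_trans (mle_le le_a1 p) (leq_msize a p).
  apply: eq_big => [c | c /andP[_ le_c1]]; last exact: cterm_mpart.
  apply: andb_idl => le_c1.
  have -> : mle (fv c) a.
    by apply/forallP => p; exact: leq_trans (mle_le le_c1 p) (mle_le le_a1 p).
  apply: contraTneq isT => eq_ca.
  by move: (mle_le le_c1 p0); rewrite eq_ca [a1 _]ffunE (negbTE p0S) leqNgt ap0.
rewrite kappa_rec (bigID (fun c => mle (fv c) a1)) /= inside big1 ?addr0 //.
rewrite -moment_xX_disjoint -?mpart_add ?subrr //; apply: (disjoint_sides (S := S)).
  by rewrite subUset sub1set oneS Vset_mpart.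
exact: Vset_mpart (mclosedC clS).
Qed.
End Cumulants.

Theorem mainTheorem5 (R : realFieldType) (n : nat) (hn : (0 < n)%N)
  (lambda rho : R) (hl : 0 <= lambda) (hr0 : 0 < rho) (hr1 : rho < 1)
  (a : midx n) :
  (* some edge of alpha lies in a component not containing vertex 1 *)
  ((exists p : pairs n, (0 < a p)%N /\ ~~ connect (madj a) (val p).1 (Ordinal hn)) ->
     kappa lambda rho (Ordinal hn) a = 0)
  /\
  (* in particular: alpha disconnected (two edges in different components) *)
  ((exists p q : pairs n, [/\ (0 < a p)%N, (0 < a q)%N &
        ~~ connect (madj a) (val p).1 (val q).1]) ->
     kappa lambda rho (Ordinal hn) a = 0).
Proof.
set o := Ordinal hn.
(* S is the connected component of vertex 1, which no edge crosses. *)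
have o_comp : o \in [set i | connect (madj a) i o] by rewrite inE connect0.
have edge_outside : (exists p : pairs n, (0 < a p)%N /\ ~~ connect (madj a) (val p).1 o) ->
    kappa lambda rho o a = 0.
  case=> p [ap not_po].
  apply: (kappa_edge_outside lambda rho o_comp (@component_closed _ a o)).
  by exists p; rewrite // inE.
(* Two edges in different components: one of them avoids the component of 1. *)
split=> // -[p [q [ap aq not_pq]]].
have [po | not_po] := boolP (connect (madj a) (val p).1 o); last by apply: edge_outside; exists p.
apply: edge_outside; exists q; split=> //; apply: contra not_pq => qo.
by apply: connect_trans po _; rewrite madj_connect_sym.
Qed.
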